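(* Let $G$ be a finite group, let $\mathcal{H}$ be a finite-dimensional Hilbert space, and let $f: G \to U(\mathcal{H})$ be an arbitrary function (not necessarily a homomorphism). Then there exist a finite-dimensional Hilbert space $\mathcal{H}'$, an isometry $V: \mathcal{H} \to \mathcal{H}'$, and a unitary representation $\pi: G \to U(\mathcal{H}')$ of $G$ such that for every probability measure $\mu$ on $G$, every normalised density operator $\psi$ on $\mathcal{H}$, and every $\epsilon \ge 0$: \[ \mathbb{E}_{g \sim \mu,\, h \sim G} \| f(h) f(g) - f(hg) \|_\psi^2 \leq \epsilon \quad\Longrightarrow\quad \mathbb{E}_{g \sim \mu} \| f(g) - V^\dagger \pi(g) V \|_\psi^2 \leq \epsilon, \] where $h \sim G$ denotes a uniformly random element of $G$. (Note that $V$ and $\pi$ depend only on $f$, not on $\mu$, $\psi$ or $\epsilon$.)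
   Context: $U(\mathcal{H})$ denotes the set of unitary operators on $\mathcal{H}$. For a positive semidefinite operator $\psi$ on $\mathcal{H}$ and a linear operator $A$ on $\mathcal{H}$, the state-dependent (semi)norm is $\|A\|_\psi^2 := \mathrm{Tr}[A^\dagger A \psi]$. *)

From HB Require Import structures.
From mathcomp Require Import all_boot all_order all_algebra all_fingroup.
From mathcomp Require Export mxrepresentation.
Set Implicit Arguments. Unset Strict Implicit. Unset Printing Implicit Defensive.
Import Order.TTheory GRing.Theory Num.Theory.
Local Open Scope ring_scope.

(* Scalars: an arbitrary numeric algebraically closed field C (e.g. the complex
   numbers); a finite-dimensional Hilbert space of dimension n is 'cV[C]_n with
   the standard inner product <u,v> = (u^* v). *)

Definition adj (C : numClosedFieldType) m n (A : 'M[C]_(m, n)) : 'M[C]_(n, m) :=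
  (map_mx Num.conj A)^T.

(* A is unitary: A^dagger A = 1 (on a finite-dimensional space, equivalent to
   A A^dagger = 1 as well) *)
Definition unitary (C : numClosedFieldType) n (A : 'M[C]_n) : Prop :=
  adj A *m A = 1%:M /\ A *m adj A = 1%:M.

Definition isometry_mx (C : numClosedFieldType) m n (V : 'M[C]_(m, n)) : Prop :=
  adj V *m V = 1%:M.

Definition psd (C : numClosedFieldType) n (psi : 'M[C]_n) : Prop :=
  adj psi = psi /\ forall v : 'cV[C]_n, 0 <= (adj v *m psi *m v) 0 0.

Definition density (C : numClosedFieldType) n (psi : 'M[C]_n) : Prop :=
  psd psi /\ \tr psi = 1.

Definition sqnorm_st (C : numClosedFieldType) n (psi A : 'M[C]_n) : C :=
  \tr (adj A *m A *m psi).

Definition prob_measure (C : numClosedFieldType) (T : finType) (mu : T -> C) : Prop :=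
  (forall t, 0 <= mu t) /\ \sum_t mu t = 1.

From HB Require Import structures.
From mathcomp Require Import all_boot all_order all_algebra all_fingroup mxrepresentation.
Import Order.TTheory GRing.Theory Num.Theory.
Set Implicit Arguments. Unset Strict Implicit. Unset Printing Implicit Defensive.
Local Open Scope ring_scope.

(* Dilate f to the right regular representation amplified by H: with
   H' = (+)_h H, V = |G|^(-1/2) (f h)_h and pi g the block permutation h |-> h g,
   V^dag pi(g) V is the average over h of f(h)^dag f(hg). Hence
   f(g) - V^dag pi(g) V = E_h f(h)^dag (f(h) f(g) - f(hg)), and the claim follows
   pointwise in g from the convexity of ||.||_psi^2 (the variance is nonnegative)
   and the invariance of ||.||_psi under left multiplication by a unitary. *)

Section Adjoint.
Variable C : numClosedFieldType.

Lemma adj_mul m n p (A : 'M[C]_(m, n)) (B : 'M[C]_(n, p)) :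
  adj (A *m B) = adj B *m adj A.
Proof. by rewrite /adj map_mxM trmx_mul. Qed.

Lemma adjK m n (A : 'M[C]_(m, n)) : adj (adj A) = A.
Proof. by apply/matrixP=> i j; rewrite !mxE conjCK. Qed.

Lemma adjB m n (A B : 'M[C]_(m, n)) : adj (A - B) = adj A - adj B.
Proof. by apply/matrixP=> i j; rewrite !mxE rmorphB. Qed.

Lemma adjZ m n a (A : 'M[C]_(m, n)) : adj (a *: A) = a^* *: adj A.
Proof. by apply/matrixP=> i j; rewrite !mxE rmorphM. Qed.

Lemma adj_sum m n (I : finType) (F : I -> 'M[C]_(m, n)) :
  adj (\sum_i F i) = \sum_i adj (F i).
Proof.
apply/matrixP=> i j; rewrite !mxE !summxE rmorph_sum.
by apply: eq_bigr => k _; rewrite !mxE.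
Qed.

Lemma adj_mx1 n : adj (1%:M : 'M[C]_n) = 1%:M.
Proof. by apply/matrixP=> i j; rewrite !mxE rmorph_nat eq_sym. Qed.

Lemma adj_mxcol p (p_ : 'I_p -> nat) m (B : forall i, 'M[C]_(p_ i, m)) :
  adj (\mxcol_i B i) = \mxrow_i adj (B i).
Proof. by apply/matrixP=> i j; rewrite !mxE. Qed.

Lemma adj_mxblock p (p_ : 'I_p -> nat) (B : forall i j, 'M[C]_(p_ i, p_ j)) :
  adj (\mxblock_(i, j) B i j) = \mxblock_(i, j) adj (B j i).
Proof. by apply/matrixP=> i j; rewrite !mxE. Qed.

End Adjoint.

Section StateNorm.
Variables (C : numClosedFieldType) (n : nat) (psi : 'M[C]_n).

(* tr (A^dag A psi) = tr (A psi A^dag) = sum_i <A^dag e_i, psi A^dag e_i> *)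
Lemma sqnorm_st_ge0 (A : 'M[C]_n) : psd psi -> 0 <= sqnorm_st psi A.
Proof.
move=> [_ psi_ge0]; rewrite /sqnorm_st -mulmxA mxtrace_mulC.
apply: sumr_ge0 => i _.
have := psi_ge0 (\matrix_(k, _) adj A k i); congr (_ <= _).
rewrite !mxE; apply: eq_bigr => k _; rewrite !mxE; congr (_ * _).
by apply: eq_bigr => l _; rewrite !mxE conjCK.
Qed.

Lemma sqnorm_st_unitary_mull (U A : 'M[C]_n) :
  unitary U -> sqnorm_st psi (adj U *m A) = sqnorm_st psi A.
Proof.
move=> [_ UUadj]; rewrite /sqnorm_st adj_mul adjK.
by rewrite -!mulmxA [U *m _]mulmxA UUadj mul1mx.
Qed.

Lemma sqnorm_st_avg_le (I : finType) (B : I -> 'M[C]_n) :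
  psd psi -> (0 < #|I|)%N ->
  sqnorm_st psi ((#|I|%:R)^-1 *: \sum_i B i)
    <= (#|I|%:R)^-1 * \sum_i sqnorm_st psi (B i).
Proof.
move=> psi_psd I_gt0; set k : C := #|I|%:R.
have k_gt0 : 0 < k by rewrite ltr0n.
have k_neq0 : k != 0 by rewrite gt_eqF.
set D := k^-1 *: \sum_i B i.
have sumB : \sum_i B i = k *: D by rewrite /D scalerA divff // scale1r.
have variance : \sum_i sqnorm_st psi (B i - D)
                = \sum_i sqnorm_st psi (B i) - k * sqnorm_st psi D.
  have expand i : sqnorm_st psi (B i - D) = sqnorm_st psi (B i)
      - \tr (adj (B i) *m D *m psi) - \tr (adj D *m B i *m psi) + sqnorm_st psi D.
    by rewrite /sqnorm_st adjB mulmxBl !mulmxBr !mulmxBl !raddfB /= opprK addrA.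
  have cross_l : \sum_i \tr (adj (B i) *m D *m psi) = k * sqnorm_st psi D.
    rewrite -raddf_sum -!mulmx_suml -adj_sum sumB adjZ rmorph_nat.
    by rewrite -!scalemxAl [LHS]linearZ.
  have cross_r : \sum_i \tr (adj D *m B i *m psi) = k * sqnorm_st psi D.
    by rewrite -raddf_sum -mulmx_suml -mulmx_sumr sumB -scalemxAr -scalemxAl [LHS]linearZ.
  under eq_bigr do rewrite expand.
  by rewrite !big_split /= !sumrN cross_l cross_r sumr_const -mulr_natl subrK.
have : 0 <= \sum_i sqnorm_st psi (B i - D).
  by apply: sumr_ge0 => i _; exact: sqnorm_st_ge0.
by rewrite variance subr_ge0 -ler_pdivlMl.
Qed.

End StateNorm.

Lemma conj_invsqrtC_mul (C : numClosedFieldType) (x : C) :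
  0 <= x -> ((sqrtC x)^-1)^* * (sqrtC x)^-1 = x^-1.
Proof.
move=> x_ge0; have c_ge0 : 0 <= (sqrtC x)^-1 by rewrite invr_ge0 sqrtC_ge0.
by rewrite geC0_conj // -invfM -expr2 sqrtCK.
Qed.

Section RegularDilation.
Variables (C : numClosedFieldType) (gT : finGroupType) (n : nat).

Lemma card_finGroupType_gt0 : (0 < #|gT|)%N.
Proof. by apply/card_gt0P; exists 1%g. Qed.

Lemma natr_card_neq0 : #|gT|%:R != 0 :> C.
Proof. by rewrite pnatr_eq0 -lt0n card_finGroupType_gt0. Qed.

Definition rmul_ord (g : gT) (i : 'I_#|gT|) : 'I_#|gT| :=
  enum_rank (enum_val i * g)%g.

Lemma rmul_ordE g i : enum_val (rmul_ord g i) = (enum_val i * g)%g.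
Proof. exact: enum_rankK. Qed.

Lemma eq_rmul_ord g i j : (j == rmul_ord g i) = (enum_val j == enum_val i * g)%g.
Proof. by rewrite -rmul_ordE (inj_eq enum_val_inj). Qed.

Definition rreg_mx (g : gT) : 'M[C]_(\sum_(i < #|gT|) n) :=
  \mxblock_(i, j) ((j == rmul_ord g i)%:R *: (1%:M : 'M[C]_n)).

Lemma rreg_mx1 : rreg_mx 1%g = 1%:M.
Proof.
rewrite -(mxdiagZ (p_ := fun _ => n) 1) /mxdiag /rreg_mx.
apply: eq_mxblock => i j; rewrite eq_rmul_ord mulg1 (inj_eq enum_val_inj) eq_sym.
by case: eqP => _; rewrite ?conform_mx_id ?scale1r ?scale0r.
Qed.

Lemma rreg_mxM g h : rreg_mx g *m rreg_mx h = rreg_mx (g * h)%g.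
Proof.
rewrite /rreg_mx mul_mxblock; apply: eq_mxblock => i l.
under eq_bigr do rewrite -scalemxAl -scalemxAr scalerA mul1mx.
rewrite -scaler_suml; congr (_ *: _).
rewrite (bigD1 (rmul_ord g i)) //= big1 ?addr0 => [|j /negbTE ->]; last by rewrite mul0r.
by rewrite eqxx mul1r !eq_rmul_ord rmul_ordE mulgA.
Qed.

Lemma rreg_mx_repr : mx_repr [set: gT] rreg_mx.
Proof. by split=> [|g h _ _]; rewrite ?rreg_mx1 ?rreg_mxM. Qed.

Lemma adj_rreg_mx g : adj (rreg_mx g) = rreg_mx g^-1.
Proof.
rewrite /rreg_mx adj_mxblock; apply: eq_mxblock => i j.
rewrite adjZ adj_mx1 rmorph_nat !eq_rmul_ord; congr ((_ : bool)%:R *: _).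
by apply/eqP/eqP => ->; rewrite ?mulgK ?mulgKV.
Qed.

Lemma rreg_mx_unitary g : unitary (rreg_mx g).
Proof. by rewrite /unitary adj_rreg_mx !rreg_mxM mulVg mulgV rreg_mx1. Qed.

Variable f : gT -> 'M[C]_n.
Hypothesis f_unitary : forall g, unitary (f g).

Definition dilation : 'M[C]_(\sum_(i < #|gT|) n, n) :=
  \mxcol_i ((sqrtC #|gT|%:R)^-1 *: f (enum_val i)).

Lemma dilation_isometry : isometry_mx dilation.
Proof.
rewrite /isometry_mx /dilation adj_mxcol mul_mxrow_mxcol.
under eq_bigr do rewrite adjZ -scalemxAl -scalemxAr scalerA
  conj_invsqrtC_mul ?ler0n // (proj1 (f_unitary _)).
by rewrite sumr_const card_ord -scaler_nat scalerA mulrC mulVf ?scale1r ?natr_card_neq0.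
Qed.

Lemma rreg_mx_dilation g :
  rreg_mx g *m dilation = \mxcol_i ((sqrtC #|gT|%:R)^-1 *: f (enum_val i * g)%g).
Proof.
rewrite /rreg_mx /dilation mul_mxblock_mxrow; apply: eq_mxcol => i.
rewrite (bigD1 (rmul_ord g i)) //= big1 ?addr0 => [|j /negbTE ->].
  by rewrite eqxx scale1r mul1mx rmul_ordE.
by rewrite scale0r mul0mx.
Qed.

Lemma compress_rreg_mx g :
  adj dilation *m rreg_mx g *m dilation
  = (#|gT|%:R)^-1 *: \sum_h adj (f h) *m f (h * g)%g.
Proof.
rewrite -mulmxA rreg_mx_dilation /dilation adj_mxcol mul_mxrow_mxcol.
rewrite [in RHS](reindex (enum_val : 'I_#|gT| -> gT)) /=; last exact/onW_bij/enum_val_bij.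
rewrite scaler_sumr; apply: eq_bigr => i _.
by rewrite adjZ -scalemxAl -scalemxAr scalerA conj_invsqrtC_mul ?ler0n.
Qed.

Lemma dilation_defect g :
  f g - adj dilation *m rreg_mx g *m dilation
  = (#|gT|%:R)^-1 *: \sum_h adj (f h) *m (f h *m f g - f (h * g)%g).
Proof.
rewrite compress_rreg_mx.
under [in RHS]eq_bigr do rewrite mulmxBr mulmxA (proj1 (f_unitary _)) mul1mx.
by rewrite sumrB sumr_const scalerBr -scaler_nat scalerA mulVf ?scale1r ?natr_card_neq0.
Qed.

End RegularDilation.

Theorem theorem3p1 (C : numClosedFieldType) (gT : finGroupType) (n : nat)
    (f : gT -> 'M[C]_n) (f_unitary : forall g, unitary (f g)) :
  exists (m : nat) (V : 'M[C]_(m, n)) (pi : gT -> 'M[C]_m),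
    [/\ isometry_mx V,
        (forall g, unitary (pi g)),
        mx_repr [set: gT] pi &
        forall (mu : gT -> C) (psi : 'M[C]_n) (eps : C),
          prob_measure mu -> density psi -> 0 <= eps ->
          \sum_(g : gT) mu g *
            ((#|gT|%:R)^-1 * \sum_(h : gT)
               sqnorm_st psi (f h *m f g - f (h * g)%g)) <= eps ->
          \sum_(g : gT) mu g * sqnorm_st psi (f g - adj V *m pi g *m V) <= eps].
Proof.
exists _, (dilation f), (@rreg_mx C gT n); split.
- exact: dilation_isometry.
- exact: rreg_mx_unitary.
- exact: rreg_mx_repr.
move=> mu psi eps [mu_ge0 _] [psi_psd _] _; apply: le_trans.
apply: ler_sum => g _; apply: (ler_wpM2l (mu_ge0 g)).
rewrite dilation_defect //.
apply: le_trans (sqnorm_st_avg_le _ psi_psd (card_finGroupType_gt0 gT)) _.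
by under eq_bigr do rewrite sqnorm_st_unitary_mull //.
Qed.
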